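(* Let $n\in\mathbb{N}$ with $n>500$, let $n_1,n_2,n_3,n_4$ be nonnegative integers with $\sum_{i=1}^4n_i=n$, and let $\lambda_i=\frac{n_i}{n}$ for $i=1,\dots,4$. Then \[ \frac{n!}{n_1!\,n_2!\,n_3!\,n_4!}\prod_{i=1}^4\lambda_i^{n_i}>\frac{1}{n^2}. \]
   Context: The convention $0^0=1$ is used. *)

From mathcomp Require Import all_boot all_order all_algebra.

(* Write f k := k^k / k! (powfact below); the left-hand side equals
   f n1 f n2 f n3 f n4 / f n, so it suffices to show f n^2 < n^4 (f n1 f n2 f n3 f n4)^2.
   The sequence G k := k (f k)^2 has ratios w k := G (k+1) / G k = ((k+1)/k)^(2k+1),
   which decrease from w 1 = 8; hence G (x+y) <= 8 G x G y, which yields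
   f (x+y)^2 <= (2(x+y)+1) f x^2 f y^2.  Applied three times, this gives
   f n^2 <= (2n+1)^3 (f n1 f n2 f n3 f n4)^2, and (2n+1)^3 < n^4. *)
From mathcomp Require Import all_boot all_order all_algebra.
From mathcomp Require Import zify ring.
Import Order.TTheory GRing.Theory Num.Theory.

(* Six times the binomial expansion of (M+1)^(m+3), truncated after the cubic term. *)
Lemma leq_binomial3_expn (M m : nat) :
  M ^ m * (6 * M ^ 3 + 6 * (m + 3) * M ^ 2 + 3 * (m + 3) * (m + 2) * M
           + (m + 3) * (m + 2) * (m + 1)) <= 6 * (M + 1) ^ (m + 3).
Proof.
elim: m => [|m IHm]; first by apply: eq_leq; rewrite expn0; ring.
set p := M ^ m in IHm *; set q := (M + 1) ^ (m + 3) in IHm *.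
rewrite [M ^ m.+1]expnS addSn [(M + 1) ^ (m + 3).+1]expnS -/p -/q mulnCA.
apply: leq_trans (leq_mul (leqnn (M + 1)) IHm).
apply: leq_trans (leq_addr (p * ((m + 3) * (m + 2) * (m + 1))) _) _.
apply: eq_leq; ring.
Qed.

(* w (j+2) <= w (j+1) with denominators cleared.  With M := (j+1)(j+3) we have
   M + 1 = (j+2)^2, and the cubic truncation of (1 + 1/M)^(2j+3) already suffices. *)
Lemma powfact_ratio_decr_nat (j : nat) :
  (j + 3) ^ (2 * j + 5) * (j + 1) ^ (2 * j + 3) <= (j + 2) ^ (4 * j + 8).
Proof.
set M := (j + 1) * (j + 3).
have -> : (j + 2) ^ (4 * j + 8) = (M + 1) ^ (2 * j + 3) * (j + 2) ^ 2.
  have -> : M + 1 = (j + 2) ^ 2 by rewrite /M; ring.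
  by rewrite -expnM -expnD; congr (_ ^ _); ring.
have -> : (j + 3) ^ (2 * j + 5) * (j + 1) ^ (2 * j + 3)
          = M ^ (2 * j) * (M ^ 3 * (j + 3) ^ 2).
  by rewrite /M !expnMn !expnD; ring.
have := leq_binomial3_expn M (2 * j).
set P := (X in M ^ (2 * j) * X <= _) => binM.
have dominate : 6 * (M ^ 3 * (j + 3) ^ 2) <= P * (j + 2) ^ 2.
  have -> : P * (j + 2) ^ 2 = 6 * (M ^ 3 * (j + 3) ^ 2)
      + (78 + 220 * j + 220 * j ^ 2 + 96 * j ^ 3 + 20 * j ^ 4 + 2 * j ^ 5).
    by rewrite /P /M; ring.
  exact: leq_addr.
rewrite -(leq_pmul2l (_ : 0 < 6)) // mulnCA.
apply: leq_trans (leq_mul (leqnn _) dominate) _.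
by rewrite mulnA mulnA leq_mul.
Qed.

Lemma cube_lt_fourth (n : nat) : 27 < n -> (2 * n + 1) ^ 3 < n ^ 4.
Proof.
move=> n_gt27; apply: (@leq_ltn_trans ((3 * n) ^ 3)); first by rewrite leq_exp2r; lia.
by rewrite expnMn (_ : 4 = 1 + 3) // expnD ltn_pmul2r ?expn_gt0; lia.
Qed.

Local Open Scope ring_scope.

Section PowFact.
Variable R : realFieldType.

Definition powfact (k : nat) : R := k%:R ^+ k / (k`!)%:R.

Definition wpowfact (k : nat) : R := k%:R * powfact k ^+ 2.

Definition powfact_ratio (k : nat) : R := (k.+1%:R / k%:R) ^+ (2 * k + 1).

Lemma powfact_gt0 k : 0 < powfact k.
Proof.
rewrite /powfact divr_gt0 ?ltr0n ?fact_gt0 //.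
by case: k => [|k]; rewrite ?expr0 // exprn_gt0 // ltr0n.
Qed.

Lemma powfact0 : powfact 0 = 1.
Proof. by rewrite /powfact expr0 divr1. Qed.

Lemma wpowfact_ge0 k : 0 <= wpowfact k.
Proof. by rewrite /wpowfact mulr_ge0 // exprn_ge0 // ltW ?powfact_gt0. Qed.

Lemma wpowfact1 : wpowfact 1 = 1.
Proof. by rewrite /wpowfact /powfact expr1 divr1 mul1r expr1n. Qed.

Lemma powfact_ratio_ge0 k : 0 <= powfact_ratio k.
Proof. by rewrite /powfact_ratio exprn_ge0 // divr_ge0. Qed.

Lemma powfact_ratio1 : powfact_ratio 1 = 8.
Proof. by rewrite /powfact_ratio divr1 -natrX. Qed.

Lemma wpowfactS k : (0 < k)%N -> wpowfact k.+1 = powfact_ratio k * wpowfact k.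
Proof.
move=> k_gt0; rewrite /wpowfact /powfact /powfact_ratio factS natrM.
have k_neq0 : (k%:R : R) != 0 by rewrite pnatr_eq0 -lt0n.
have -> : (k.+1%:R / k%:R : R) ^+ (2 * k + 1)
          = (k.+1%:R ^+ k / k%:R ^+ k) ^+ 2 * (k.+1%:R / k%:R).
  by rewrite exprD expr1 mulnC exprM !expr_div_n.
rewrite [k.+1%:R ^+ k.+1]exprS.
field; by rewrite expf_neq0 // k_neq0 pnatr_eq0 -lt0n fact_gt0 nat1r pnatr_eq0.
Qed.

Lemma powfact_ratio_decr k : (0 < k)%N -> powfact_ratio k.+1 <= powfact_ratio k.
Proof.
case: k => // j _; rewrite /powfact_ratio !expr_div_n.
rewrite ler_pdivrMr ?exprn_gt0 ?ltr0n // mulrAC ler_pdivlMr ?exprn_gt0 ?ltr0n //.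
rewrite -!natrX -!natrM ler_nat -expnD.
have := powfact_ratio_decr_nat j.
have -> : (4 * j + 8 = 2 * j.+1 + 1 + (2 * j.+2 + 1))%N by lia.
have -> : (2 * j.+2 + 1 = 2 * j + 5)%N by lia.
have -> : (2 * j.+1 + 1 = 2 * j + 3)%N by lia.
by rewrite !addn3 !addn1 !addn2.
Qed.

Lemma powfact_ratio_nonincr i j : (0 < i)%N -> (i <= j)%N ->
  powfact_ratio j <= powfact_ratio i.
Proof.
move=> i_gt0; elim: j => [|j IHj]; first by rewrite leqn0 => /eqP i0; rewrite i0 in i_gt0.
rewrite leq_eqVlt => /predU1P [-> // | ]; rewrite ltnS => le_ij.
apply: le_trans (IHj le_ij); exact: powfact_ratio_decr (leq_trans i_gt0 le_ij).
Qed.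

(* Compare the ratios w (x+y-1), ..., w y of G (x+y) / G y with
   w (x-1), ..., w 1 of G x, plus one extra factor w y <= w 1 = 8. *)
Lemma wpowfact_submul x y : (0 < x)%N -> (0 < y)%N ->
  wpowfact (x + y) <= 8 * wpowfact x * wpowfact y.
Proof.
move=> + y_gt0; elim: x => // x IHx _.
case: (posnP x) => [-> | x_gt0].
  rewrite add1n wpowfactS // wpowfact1 mulr1 -powfact_ratio1.
  by apply: ler_pM; rewrite ?powfact_ratio_ge0 ?wpowfact_ge0 ?powfact_ratio_nonincr.
rewrite addSn !wpowfactS ?addn_gt0 ?x_gt0 //.
rewrite (_ : 8 * _ * _ = powfact_ratio x * (8 * wpowfact x * wpowfact y)); last by ring.
apply: ler_pM; rewrite ?powfact_ratio_ge0 ?wpowfact_ge0 ?IHx //.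
exact: powfact_ratio_nonincr (leq_addr _ _).
Qed.

Lemma powfactD_sq x y :
  powfact (x + y) ^+ 2 <= (2 * (x + y) + 1)%:R * powfact x ^+ 2 * powfact y ^+ 2.
Proof.
have fx_gt0 := exprn_gt0 2 (powfact_gt0 x); have fy_gt0 := exprn_gt0 2 (powfact_gt0 y).
case: (posnP x) => [-> | x_gt0].
  by rewrite powfact0 expr1n mulr1 add0n ler_pMl // ler1n; lia.
case: (posnP y) => [-> | y_gt0].
  by rewrite powfact0 expr1n mulr1 addn0 ler_pMl // ler1n; lia.
have := @wpowfact_submul x y x_gt0 y_gt0; rewrite /wpowfact => sub.
rewrite -(@ler_pM2l _ (x + y)%:R) ?ltr0n ?addn_gt0 ?x_gt0 //.
apply: le_trans sub _.
set F := powfact x ^+ 2 * powfact y ^+ 2.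
rewrite (_ : 8 * _ * _ = (8 * x * y)%:R * F); last by rewrite !natrM /F; ring.
rewrite (_ : (x + y)%:R * _ = ((x + y) * (2 * (x + y) + 1))%:R * F);
  last by rewrite natrM /F; ring.
rewrite ler_pM2r ?ler_nat; last exact: mulr_gt0 fx_gt0 fy_gt0.
by case: (leqP x y) => h; [rewrite -(subnK h) | rewrite -(subnK (ltnW h))]; nia.
Qed.

Lemma powfact_sum_sq k (ns : 'I_k.+1 -> nat) :
  powfact (\sum_i ns i) ^+ 2
  <= (2 * (\sum_i ns i) + 1)%:R ^+ k * \prod_i powfact (ns i) ^+ 2.
Proof.
elim: k ns => [|k IHk] ns; first by rewrite !big_ord1 expr0 mul1r.
rewrite big_ord_recl [\prod_(_ < _) _]big_ord_recl.
set s := (\sum_(i < k.+1) ns (lift ord0 i))%N.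
have sq_ge0 j : 0 <= powfact j ^+ 2 by rewrite exprn_ge0 // ltW ?powfact_gt0.
apply: le_trans (powfactD_sq _ _) _.
set K := (2 * (ns ord0 + s) + 1)%:R; set Q := \prod_(i < k.+1) _.
rewrite (_ : K ^+ k.+1 * _ = K * powfact (ns ord0) ^+ 2 * (K ^+ k * Q));
  last by rewrite exprS; ring.
apply: ler_wpM2l; first by rewrite mulr_ge0 ?ler0n.
apply: le_trans (IHk _) _; rewrite -/s ler_wpM2r ?prodr_ge0 //.
by rewrite lerXn2r ?nnegrE ?ler0n // ler_nat; lia.
Qed.

Lemma multinomial_powfact k (ns : 'I_k -> nat) (n : nat) :
  (\sum_i ns i)%N = n ->
  (n`!)%:R / (\prod_i (ns i)`!)%:R * \prod_i ((ns i)%:R / n%:R) ^+ ns i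
  = (\prod_i powfact (ns i)) / powfact n.
Proof.
move=> sum_ns.
have -> : \prod_i ((ns i)%:R / n%:R) ^+ ns i
          = \prod_i (ns i)%:R ^+ ns i / n%:R ^+ n :> R.
  by rewrite -sum_ns -prodrXr -prodf_div; apply: eq_bigr => i _; rewrite expr_div_n.
rewrite /powfact prodf_div natr_prod.
have fact_neq0 j : ((j`!)%:R : R) != 0 by rewrite pnatr_eq0 -lt0n fact_gt0.
have prod_neq0 : \prod_i ((ns i)`!)%:R != 0 :> R.
  by rewrite prodf_seq_neq0; apply/allP => i _; exact: fact_neq0.
have pow_neq0 : (n%:R : R) ^+ n != 0.
  by case: n {sum_ns} => [|n]; rewrite ?expr0 ?oner_neq0 // expf_neq0 // pnatr_eq0.
by field; rewrite fact_neq0 prod_neq0 pow_neq0.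
Qed.

End PowFact.

Theorem lemma7 (R : realFieldType) (n : nat) (ns : 'I_4 -> nat) :
  (500 < n)%N -> (\sum_(i < 4) ns i)%N = n ->
  (n`!)%:R / (\prod_(i < 4) (ns i)`!)%:R
    * \prod_(i < 4) ((ns i)%:R / n%:R) ^+ (ns i)
  > 1 / (n%:R ^+ 2) :> R.
Proof.
move=> n_gt500 sum_ns; rewrite multinomial_powfact //.
set P := \prod_i powfact R (ns i).
have P_gt0 : 0 < P by apply: prodr_gt0 => i _; exact: powfact_gt0.
have n_gt0 : (0 : R) < n%:R by rewrite ltr0n; lia.
rewrite ltr_pdivlMr ?powfact_gt0 // div1r ltr_pdivrMl ?exprn_gt0 //.
rewrite -(@ltr_pXn2r R 2) // ?nnegrE ?ltW ?powfact_gt0 ?mulr_gt0 ?exprn_gt0 //.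
have := powfact_sum_sq R 3 ns; rewrite sum_ns => /le_lt_trans; apply.
rewrite prodrXl -/P exprMn -exprM ltr_pM2r ?exprn_gt0 // -!natrX ltr_nat.
by apply: cube_lt_fourth; lia.
Qed.
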